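(* Let $(A,\circ)$ be a permutative algebra and let $D_1,D_2:A\to A$ be derivations of $(A,\circ)$ with $D_1D_2=D_2D_1$. Define $[x,y]=D_1(x)\circ D_2(y)-D_2(x)\circ D_1(y)$ for $x,y\in A$. Then $(A,[\cdot,\cdot])$ is a Leibniz algebra, and $(A,\circ,[\cdot,\cdot])$ is a dual pre-Poisson algebra.
   Context: Field $\mathbb{F}$ of characteristic $0$. A permutative algebra: $x\circ(y\circ z)=(x\circ y)\circ z=(y\circ x)\circ z$. A derivation is a linear $D$ with $D(x\circ y)=D(x)\circ y+x\circ D(y)$. A Leibniz algebra: $[x,[y,z]]=[[x,y],z]+[y,[x,z]]$. A dual pre-Poisson algebra $(A,\circ,[\cdot,\cdot])$: $(A,\circ)$ permutative, $(A,[\cdot,\cdot])$ Leibniz, and $[x,y\circ z]=[x,y]\circ z+y\circ[x,z]$, $[x\circ y,z]=x\circ[y,z]+y\circ[x,z]$, $[x,y]\circ z=-[y,x]\circ z$. *)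

From mathcomp Require Import all_boot all_algebra.
Set Implicit Arguments. Unset Strict Implicit. Unset Printing Implicit Defensive.
Import GRing.Theory.
Local Open Scope ring_scope.

Definition bilinear_op (F : fieldType) (A : lmodType F) (mul : A -> A -> A) : Prop :=
  (forall x, linear (mul x)) /\ (forall y, linear (fun x => mul x y)).

Definition permutative (F : fieldType) (A : lmodType F) (mul : A -> A -> A) : Prop :=
  bilinear_op mul /\
  forall x y z, mul x (mul y z) = mul (mul x y) z /\ mul (mul x y) z = mul (mul y x) z.

Definition derivation (F : fieldType) (A : lmodType F) (mul : A -> A -> A)
  (D : A -> A) : Prop :=
  linear D /\ forall x y, D (mul x y) = mul (D x) y + mul x (D y).

Definition leibniz (F : fieldType) (A : lmodType F) (br : A -> A -> A) : Prop :=
  bilinear_op br /\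
  forall x y z, br x (br y z) = br (br x y) z + br y (br x z).

Definition dual_pre_poisson (F : fieldType) (A : lmodType F)
  (mul br : A -> A -> A) : Prop :=
  permutative mul /\ leibniz br /\
  (forall x y z, br x (mul y z) = mul (br x y) z + mul y (br x z)) /\
  (forall x y z, br (mul x y) z = mul x (br y z) + mul y (br x z)) /\
  (forall x y z, mul (br x y) z = - mul (br y x) z).

(* Expanding with the derivation rule
   and sorting the products with the permutative laws a(bc) = (ab)c = (ba)c
   gives the compatibilities with ∘ directly; in particular [x,-] is a
   derivation of ∘.  Since D1 and D2 commute, they are also derivations of the
   bracket.  Expanding [x,[y,z]] - [[x,y],z] - [y,[x,z]] with these two rules
   leaves, up to sign, ([D1 x,y] D2 z - D2 y [D1 x,z]) - ([D2 x,y] D1 z - D1 y [D2 x,z]),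
   and both halves equal (m D2 y) D1 z - (m D1 y) D2 z with m = D1 D2 x. *)
From HB Require Import structures.
From mathcomp Require Import all_boot all_algebra.
Set Implicit Arguments.
Unset Strict Implicit.
Unset Printing Implicit Defensive.
Import GRing.Theory.
Local Open Scope ring_scope.

Section LinearMap.
Variables (F : fieldType) (A : lmodType F) (f : A -> A).
Hypothesis f_lin : linear f.

HB.instance Definition _ := GRing.isLinear.Build F A A *:%R f f_lin.

Lemma linD x y : f (x + y) = f x + f y. Proof. exact: linearD. Qed.
Lemma linB x y : f (x - y) = f x - f y. Proof. exact: linearB. Qed.
Lemma linN x : f (- x) = - f x. Proof. exact: linearN. Qed.
Lemma linZ a x : f (a *: x) = a *: f x. Proof. exact: linearZ. Qed.

End LinearMap.

Section DerivationBracket.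
Variables (F : fieldType) (A : lmodType F) (mul : A -> A -> A) (D1 D2 : A -> A).

Local Notation "x ∘ y" := (mul x y) (at level 40, left associativity).

Hypothesis mul_bilin : bilinear_op mul.
Hypothesis mulA : forall x y z, x ∘ (y ∘ z) = x ∘ y ∘ z.
Hypothesis mulCl : forall x y z, x ∘ y ∘ z = y ∘ x ∘ z.
Hypotheses (D1_lin : linear D1) (D2_lin : linear D2).
Hypothesis D1M : forall x y, D1 (x ∘ y) = D1 x ∘ y + x ∘ D1 y.
Hypothesis D2M : forall x y, D2 (x ∘ y) = D2 x ∘ y + x ∘ D2 y.
Hypothesis D1D2C : forall x, D1 (D2 x) = D2 (D1 x).

Definition br x y := D1 x ∘ D2 y - D2 x ∘ D1 y.

Lemma mulDl x y z : (x + y) ∘ z = x ∘ z + y ∘ z.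
Proof. exact: (linD (mul_bilin.2 z) x y). Qed.

Lemma mulBl x y z : (x - y) ∘ z = x ∘ z - y ∘ z.
Proof. exact: (linB (mul_bilin.2 z) x y). Qed.

Lemma mulZl a x y : (a *: x) ∘ y = a *: (x ∘ y).
Proof. exact: (linZ (mul_bilin.2 y) a x). Qed.

Lemma mulDr x y z : x ∘ (y + z) = x ∘ y + x ∘ z.
Proof. exact: (linD (mul_bilin.1 x) y z). Qed.

Lemma mulBr x y z : x ∘ (y - z) = x ∘ y - x ∘ z.
Proof. exact: (linB (mul_bilin.1 x) y z). Qed.

Lemma mulNr x y : x ∘ (- y) = - (x ∘ y).
Proof. exact: (linN (mul_bilin.1 x) y). Qed.

Lemma mulZr a x y : x ∘ (a *: y) = a *: (x ∘ y).
Proof. exact: (linZ (mul_bilin.1 x) a y). Qed.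

Lemma bilinear_br : bilinear_op br.
Proof.
split=> [x | y] a u v; rewrite /br;
  rewrite !(linD D1_lin, linD D2_lin, linZ D1_lin, linZ D2_lin).
- by rewrite !(mulDr, mulZr) scalerBr opprD addrACA.
- by rewrite !(mulDl, mulZl) scalerBr opprD addrACA.
Qed.

Lemma mul_brC x y z : br x y ∘ z = - (br y x ∘ z).
Proof. by rewrite /br !mulBl (mulCl (D1 y)) (mulCl (D2 y)) opprB. Qed.

Lemma br_mulr x y z : br x (y ∘ z) = br x y ∘ z + y ∘ br x z.
Proof.
rewrite /br D1M D2M !(mulBr, mulBl, mulDr, mulNr) !mulA ![_ ∘ y ∘ _]mulCl.
by rewrite opprD addrACA.
Qed.

Lemma br_mull x y z : br (x ∘ y) z = x ∘ br y z + y ∘ br x z.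
Proof.
rewrite /br D1M D2M !(mulBr, mulDl) !mulA ![_ ∘ y ∘ _]mulCl.
by rewrite opprD addrACA addrC.
Qed.

Lemma derivation_br_comm D :
  linear D -> (forall x y, D (x ∘ y) = D x ∘ y + x ∘ D y) ->
  (forall x, D (D1 x) = D1 (D x)) -> (forall x, D (D2 x) = D2 (D x)) ->
  forall x y, D (br x y) = br (D x) y + br x (D y).
Proof.
move=> D_lin DM DD1 DD2 x y.
by rewrite /br (linB D_lin) !DM !DD1 !DD2 opprD addrACA.
Qed.

Lemma br_mulD1 u y z :
  br u y ∘ D1 z - D1 y ∘ br u z = D1 u ∘ D2 y ∘ D1 z - D1 u ∘ D1 y ∘ D2 z.
Proof.
rewrite /br mulBl mulBr !mulA (mulCl (D1 y)) (mulCl (D1 y) (D2 u)).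
by rewrite opprB addrA subrK.
Qed.

Lemma br_mulD2 u y z :
  br u y ∘ D2 z - D2 y ∘ br u z = D2 u ∘ D2 y ∘ D1 z - D2 u ∘ D1 y ∘ D2 z.
Proof.
rewrite /br mulBl mulBr !mulA (mulCl (D2 y)) (mulCl (D2 y) (D2 u)).
by rewrite opprB addrC addrA subrK.
Qed.

Lemma br_leibniz x y z : br x (br y z) = br (br x y) z + br y (br x z).
Proof.
have D1_br := derivation_br_comm D1_lin D1M (fun=> erefl) D1D2C.
have D2_br := derivation_br_comm D2_lin D2M (fun x => esym (D1D2C x)) (fun=> erefl).
rewrite -[br y z]/(D1 y ∘ D2 z - D2 y ∘ D1 z) (linB (bilinear_br.1 x)) !br_mulr.
rewrite -[br (br x y) z]/(D1 (br x y) ∘ D2 z - D2 (br x y) ∘ D1 z).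
rewrite -[br y (br x z)]/(D1 y ∘ D2 (br x z) - D2 y ∘ D1 (br x z)).
rewrite D1_br D2_br D1_br D2_br (mulDl (br (D1 x) y)) (mulDl (br (D2 x) y)).
rewrite (mulDr (D1 y) (br (D2 x) z)) (mulDr (D2 y) (br (D1 x) z)).
set a := br (D1 x) y ∘ D2 z; set b := D1 y ∘ br (D2 x) z.
set c := br (D2 x) y ∘ D1 z; set e := D2 y ∘ br (D1 x) z.
have defect : a - c + (b - e) = 0.
  rewrite (addrC b) addrACA (addrC (- c)) -(opprB c) /a /b /c /e.
  by rewrite br_mulD2 br_mulD1 D1D2C subrr.
set A1 := br x (D1 y) ∘ D2 z; set B1 := D1 y ∘ br x (D2 z).
set C1 := br x (D2 y) ∘ D1 z; set E1 := D2 y ∘ br x (D1 z).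
rewrite !opprD (addrACA A1) (addrACA a) (addrACA b) (addrACA (a - c)).
by rewrite defect add0r.
Qed.

End DerivationBracket.

Theorem proposition2p16 (F : fieldType) (A : lmodType F)
  (mul : A -> A -> A) (D1 D2 : A -> A) :
  [pchar F] =i pred0 ->
  permutative mul ->
  derivation mul D1 -> derivation mul D2 ->
  (forall x, D1 (D2 x) = D2 (D1 x)) ->
  let br := fun x y => mul (D1 x) (D2 y) - mul (D2 x) (D1 y) in
  leibniz br /\ dual_pre_poisson mul br.
Proof.
move=> _ mul_perm [D1_lin D1M] [D2_lin D2M] D1D2C br.
have [mul_bilin mul_laws] := mul_perm.
have mulA x y z := (mul_laws x y z).1.
have mulCl x y z := (mul_laws x y z).2.
have br_bilin : bilinear_op br := bilinear_br mul_bilin D1_lin D2_lin.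
have br_leib : leibniz br :=
  conj br_bilin (br_leibniz mul_bilin mulA mulCl D1_lin D2_lin D1M D2M D1D2C).
split=> //; split=> //; split=> //; split; last split.
- exact: br_mulr mul_bilin mulA mulCl D1M D2M.
- exact: br_mull mul_bilin mulA mulCl D1M D2M.
- exact: mul_brC mul_bilin mulCl.
Qed.
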